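(* Fix $\Gamma z_0\in\mathcal M$. Let $x\in[0,1)$ be irrational with Diophantine exponent $\kappa_x>1$, and let $\{y_n\}_{n\in\mathbb N}$ be positive numbers with $y_n\asymp n^{-\beta}$ for some fixed $2<\beta<2\kappa_x$. Then $$\limsup_{n\to\infty}\frac{\inf_{\Gamma z\in\mathcal R_n(x,y_n)}d_{\mathcal M}(\Gamma z_0,\Gamma z)}{\log n}\ge\min\{2\kappa_x-\beta,\ \beta-2\}.$$
   Context: For $\kappa>0$, $x$ is primitive $n^{-\kappa}$-approximable if there are infinitely many $n\in\mathbb N$ such that some $m\in\mathbb Z$ with $\gcd(m,n)=1$ satisfies $|x-\tfrac mn|<n^{-\kappa-1}$; the Diophantine exponent $\kappa_x$ of an irrational $x$ is the supremum of $\kappa'>0$ for which $x$ is primitive $n^{-\kappa'}$-approximable. $\Gamma=\mathrm{SL}_2(\mathbb Z)$, $\mathcal M=\Gamma\backslash\mathbb H$, $d_{\mathcal M}(\Gamma z_1,\Gamma z_2)=\inf_{\gamma\in\Gamma}d_{\mathbb H}(\gamma z_1,z_2)$ with $d_{\mathbb H}$ the hyperbolic distance. $\mathcal R_n(x,y)=\{\Gamma(x+\tfrac jn+iy):0\le j\le n-1\}$. *)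

From HB Require Import structures.
From mathcomp Require Import all_boot all_order all_algebra.
From mathcomp Require Import all_classical all_reals all_analysis.
Set Implicit Arguments. Unset Strict Implicit. Unset Printing Implicit Defensive.
Import Order.TTheory GRing.Theory Num.Theory.
Local Open Scope classical_set_scope.
Local Open Scope ring_scope.

(* Points of the upper half-plane H are represented as pairs (Re z, Im z)
   with Im z > 0. *)

Definition SL2Z : set 'M[int]_2 := [set g | \det g = 1].

(* Moebius action (a z + b)/(c z + d) on z = u + i v, for det = 1:
   Re = ((a u + b)(c u + d) + a c v^2) / D,  Im = v / D,
   with D = (c u + d)^2 + (c v)^2 = |c z + d|^2. *)
Definition mob_act {R : realType} (g : 'M[int]_2) (z : R * R) : R * R :=
  let a := (g 0 0)%:~R in let b := (g 0 1)%:~R in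
  let c := (g 1 0)%:~R in let d := (g 1 1)%:~R in
  let u := z.1 in let v := z.2 in
  let D := (c * u + d) ^+ 2 + (c * v) ^+ 2 in
  (((a * u + b) * (c * u + d) + a * c * v ^+ 2) / D, v / D).

Definition arcosh {R : realType} (t : R) : R := ln (t + Num.sqrt (t ^+ 2 - 1)).

Definition dH {R : realType} (z w : R * R) : R :=
  arcosh (1 + ((z.1 - w.1) ^+ 2 + (z.2 - w.2) ^+ 2) / (2 * z.2 * w.2)).

Definition dM {R : realType} (z1 z2 : R * R) : R :=
  inf [set dH (mob_act g z1) z2 | g in SL2Z].

(* R_n(x,y) = { Gamma (x + j/n + i y) : 0 <= j <= n-1 }, given by representatives. *)
Definition Rn {R : realType} (n : nat) (x y : R) : set (R * R) :=
  [set (x + j%:R / n%:R, y) | j in [set j : nat | (j < n)%N]].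

Definition prim_approx {R : realType} (kappa x : R) : Prop :=
  forall N : nat, exists n : nat, (N < n)%N /\
    exists m : int, coprime `|m|%N n /\
      `|x - m%:~R / n%:R| < powR (n%:R) (- kappa - 1).

Definition dioph_exp {R : realType} (x : R) : \bar R :=
  ereal_sup [set (k%:E)%E | k in [set k : R | 0 < k /\ prim_approx k x]].

(* Fix k < kappa_x and let m/n be one of the infinitely many primitive
   approximants with |x - m/n| < n^(-k-1), and z = x + j/n + i y_n a point of
   R_n(x, y_n).  The integer row (n, -(m+j)) makes
   |n z - (m+j)|^2 = (n x - m)^2 + (n y_n)^2 small.  For any g in SL_2(Z) the
   row (n, -(m+j)) g is again a nonzero integer row, so
   |n (g z0) - (m+j)|^2 >= Im (g z0) min (Im z0, 1 / Im z0).  Moving both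
   points by a real Moebius map with bottom row (n, -(m+j)) and comparing
   imaginary parts gives d_H(g z0, z) >= ln (y_n / |n z - (m+j)|^2) - O(1),
   which is at least min (2k - beta, beta - 2) ln n - O(1). *)

From mathcomp Require Import all_boot all_order all_algebra.
From mathcomp Require Import all_classical all_reals all_analysis.
From mathcomp Require Import ring lra.
Set Implicit Arguments. Unset Strict Implicit. Unset Printing Implicit Defensive.
Import Order.TTheory GRing.Theory Num.Theory.
Local Open Scope classical_set_scope.
Local Open Scope ring_scope.

Lemma det_mx22 (T : comPzRingType) (g : 'M[T]_2) :
  \det g = g 0 0 * g 1 1 - g 0 1 * g 1 0.
Proof.
rewrite (expand_det_row _ 0) big_ord_recl big_ord1 /cofactor !det_mx11 !mxE /=.
have -> : lift (0 : 'I_2) (0 : 'I_1) = 1 by apply/val_inj.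
have -> : lift (1 : 'I_2) (0 : 'I_1) = 0 by apply/val_inj.
by rewrite expr0 expr1 mul1r mulN1r mulrN.
Qed.

Section UpperHalfPlane.
Variable R : realType.
Implicit Types (c d s t : R) (z w : R * R).

Definition affine_norm2 c d z : R := (c * z.1 + d) ^+ 2 + (c * z.2) ^+ 2.

Lemma affine_norm2_gt0 c d z : 0 < z.2 -> (c, d) != (0, 0) -> 0 < affine_norm2 c d z.
Proof.
move=> z2_gt0 cd_neq0; rewrite lt_neqAle addr_ge0 ?sqr_ge0 // andbT eq_sym.
rewrite paddr_eq0 ?sqr_ge0 // !sqrf_eq0 mulf_eq0 (gt_eqF z2_gt0) orbF.
apply: contra cd_neq0 => /andP[+ /eqP c0]; rewrite c0 mul0r add0r => d0.
by rewrite xpair_eqE eqxx.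
Qed.

Lemma ln_le_arcosh (u : R) : 0 < u -> ln u <= arcosh u.
Proof.
move=> u_gt0; rewrite /arcosh ler_ln ?posrE ?lerDl ?sqrtr_ge0 //.
by rewrite ltr_wpDr ?sqrtr_ge0.
Qed.

Lemma affine_norm2_im_cross_le s t z w :
  (z.2 * affine_norm2 s t w - w.2 * affine_norm2 s t z) ^+ 2 <=
  ((z.1 - w.1) ^+ 2 + (z.2 - w.2) ^+ 2) * affine_norm2 s t z * affine_norm2 s t w.
Proof.
pose E := (s * z.1 + t) * (s * w.1 + t) - s ^+ 2 * z.2 * w.2.
pose F := s * (z.2 * (s * w.1 + t) + w.2 * (s * z.1 + t)).
have -> : ((z.1 - w.1) ^+ 2 + (z.2 - w.2) ^+ 2) * affine_norm2 s t z * affine_norm2 s t w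
    = ((z.1 - w.1) * E + (z.2 - w.2) * F) ^+ 2
      + (z.2 * affine_norm2 s t w - w.2 * affine_norm2 s t z) ^+ 2.
  by rewrite /affine_norm2 /E /F; ring.
by rewrite lerDr sqr_ge0.
Qed.

(* For h in SL_2(R) with bottom row (s, t), Im (h z) = Im z / |s z + t|^2 and
   cosh d_H(z, w) = cosh d_H(h z, h w) >= cosh ln (Im (h w) / Im (h z)). *)
Lemma ln_im_ratio_le_dH s t z w : 0 < z.2 -> 0 < w.2 -> (s, t) != (0, 0) ->
  ln (w.2 * affine_norm2 s t z / (2 * z.2 * affine_norm2 s t w)) <= dH z w.
Proof.
move=> z2_gt0 w2_gt0 st_neq0.
have P_gt0 : 0 < affine_norm2 s t z by exact: affine_norm2_gt0.
have Q_gt0 : 0 < affine_norm2 s t w by exact: affine_norm2_gt0.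
move: P_gt0 Q_gt0 (affine_norm2_im_cross_le s t z w).
set P := affine_norm2 s t z; set Q := affine_norm2 s t w.
set K := (z.1 - w.1) ^+ 2 + (z.2 - w.2) ^+ 2 => P_gt0 Q_gt0 cross_le.
have ratio_gt0 : 0 < w.2 * P / (2 * z.2 * Q) by rewrite !(mulr_gt0, invr_gt0).
have cosh_ge : w.2 * P / (2 * z.2 * Q) <= 1 + K / (2 * z.2 * w.2).
  have -> : 1 + K / (2 * z.2 * w.2) = w.2 * P / (2 * z.2 * Q) + z.2 * Q / (2 * w.2 * P)
      + (K * P * Q - (z.2 * Q - w.2 * P) ^+ 2) / (2 * z.2 * w.2 * P * Q).
    by field; rewrite !gt_eqF.
  by rewrite -addrA lerDl addr_ge0 // divr_ge0 ?subr_ge0 // !mulr_ge0 // ltW.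
have cosh_gt0 := lt_le_trans ratio_gt0 cosh_ge.
rewrite /dH -/K; apply: le_trans (ln_le_arcosh cosh_gt0).
by rewrite ler_ln ?posrE.
Qed.

Lemma affine_norm2_bottom_row_gt0 (g : 'M[int]_2) z : 0 < z.2 -> \det g = 1 ->
  0 < affine_norm2 (g 1 0)%:~R (g 1 1)%:~R z.
Proof.
move=> z2_gt0; rewrite det_mx22 => det1.
apply: affine_norm2_gt0 => //; rewrite xpair_eqE !intr_eq0.
apply/negP => /andP[/eqP c0 /eqP d0]; move: det1.
by rewrite c0 d0 !mulr0 subr0.
Qed.

Lemma mob_act_im_gt0 (g : 'M[int]_2) z : 0 < z.2 -> \det g = 1 -> 0 < (mob_act g z).2.
Proof.
by move=> z2_gt0 det1; rewrite divr_gt0 // (affine_norm2_bottom_row_gt0 z2_gt0 det1).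
Qed.

Lemma affine_norm2_mob_act (g : 'M[int]_2) s t z : 0 < z.2 -> \det g = 1 ->
  affine_norm2 s t (mob_act g z) = (mob_act g z).2 / z.2 *
    affine_norm2 (s * (g 0 0)%:~R + t * (g 1 0)%:~R) (s * (g 0 1)%:~R + t * (g 1 1)%:~R) z.
Proof.
move=> z2_gt0 det1; have D_gt0 := affine_norm2_bottom_row_gt0 z2_gt0 det1.
move: det1 => /(congr1 (fun k : int => k%:~R : R)).
rewrite det_mx22 rmorphB !rmorphM rmorph1 /=.
move: D_gt0; rewrite /mob_act /affine_norm2 /=.
set a := (g 0 0)%:~R; set b := (g 0 1)%:~R; set c := (g 1 0)%:~R; set d := (g 1 1)%:~R.
set D := (c * z.1 + d) ^+ 2 + (c * z.2) ^+ 2 => D_gt0 det1.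
set N := (a * z.1 + b) * (c * z.1 + d) + a * c * z.2 ^+ 2.
have key : (s * N + t * D) ^+ 2 + (s * z.2) ^+ 2 =
    D * (((s * a + t * c) * z.1 + (s * b + t * d)) ^+ 2 + ((s * a + t * c) * z.2) ^+ 2).
  by rewrite -[s * z.2]mulr1 -det1 /D /N; ring.
have -> : (s * (N / D) + t) ^+ 2 + (s * (z.2 / D)) ^+ 2
    = ((s * N + t * D) ^+ 2 + (s * z.2) ^+ 2) / D ^+ 2.
  by field; rewrite gt_eqF.
by rewrite key; field; rewrite !gt_eqF.
Qed.

Lemma sqr_intr_ge1 (k : int) : k != 0 -> 1 <= (k%:~R : R) ^+ 2.
Proof.
move=> k_neq0; rewrite -intr_normK ?intr_int // exprn_ege1 // norm_intr_ge1 ?intr_int //.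
by rewrite intr_eq0.
Qed.

Lemma affine_norm2_int_ge (s t : int) z : 0 < z.2 -> (s, t) != (0, 0) ->
  z.2 * Num.min z.2 z.2^-1 <= affine_norm2 s%:~R t%:~R z.
Proof.
move=> z2_gt0; rewrite xpair_eqE /affine_norm2; have [-> | s_neq0 _] := eqVneq s 0.
  rewrite /= mul0r add0r mul0r expr0n addr0 => t_neq0.
  apply: le_trans (sqr_intr_ge1 t_neq0).
  rewrite -(mulfV (lt0r_neq0 z2_gt0)); apply: (ler_wpM2l (ltW z2_gt0)).
  by rewrite ge_min lexx orbT.
have m_gt0 : 0 < Num.min z.2 z.2^-1 by rewrite lt_min z2_gt0 invr_gt0.
apply: (@le_trans _ _ ((s%:~R * z.2) ^+ 2)); last by rewrite lerDr sqr_ge0.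
rewrite exprMn -[z.2 * _]mul1r; apply: ler_pM.
- exact: ler01.
- exact: mulr_ge0 (ltW z2_gt0) (ltW m_gt0).
- exact: sqr_intr_ge1.
- by rewrite expr2; apply: (ler_wpM2l (ltW z2_gt0)); rewrite ge_min lexx.
Qed.

Lemma affine_norm2_mob_act_ge (g : 'M[int]_2) (s t : int) z :
  0 < z.2 -> \det g = 1 -> (s, t) != (0, 0) ->
  (mob_act g z).2 * Num.min z.2 z.2^-1 <= affine_norm2 s%:~R t%:~R (mob_act g z).
Proof.
move=> z2_gt0 det1 st_neq0; rewrite affine_norm2_mob_act //.
set s' := s * g 0 0 + t * g 1 0; set t' := s * g 0 1 + t * g 1 1.
have s't'_neq0 : (s', t') != (0, 0).
  rewrite !xpair_eqE in st_neq0 *; apply: contra st_neq0 => /andP[/eqP s'0 /eqP t'0].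
  move: det1; rewrite det_mx22 => det1.
  have -> : s = s' * g 1 1 - t' * g 1 0 by rewrite -[s]mulr1 -det1 /s' /t'; ring.
  have -> : t = t' * g 0 0 - s' * g 0 1 by rewrite -[t]mulr1 -det1 /s' /t'; ring.
  by rewrite s'0 t'0 !mul0r subr0 eqxx.
have -> : s%:~R * (g 0 0)%:~R + t%:~R * (g 1 0)%:~R = s'%:~R :> R.
  by rewrite rmorphD !rmorphM.
have -> : s%:~R * (g 0 1)%:~R + t%:~R * (g 1 1)%:~R = t'%:~R :> R.
  by rewrite rmorphD !rmorphM.
have gz2_gt0 := mob_act_im_gt0 z2_gt0 det1.
rewrite -mulrA; apply: ler_wpM2l; first exact: ltW.
rewrite -(ler_pM2l z2_gt0) mulrA mulfV ?gt_eqF // mul1r.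
exact: affine_norm2_int_ge.
Qed.

Lemma dM_ge_ln z0 w (s t : int) : 0 < z0.2 -> 0 < w.2 -> (s, t) != (0, 0) ->
  ln (w.2 * Num.min z0.2 z0.2^-1 / (2 * affine_norm2 s%:~R t%:~R w)) <= dM z0 w.
Proof.
move=> z02_gt0 w2_gt0 st_neq0; rewrite /dM; apply: lb_le_inf.
  by exists (dH (mob_act 1%:M z0) w), 1%:M => //; rewrite /SL2Z /= det1.
move=> _ [g det1 <-]; set z := mob_act g z0.
have z2_gt0 : 0 < z.2 by exact: mob_act_im_gt0.
have st_neq0' : (s%:~R, t%:~R) != (0, 0) :> R * R by rewrite !xpair_eqE !intr_eq0.
apply: le_trans (ln_im_ratio_le_dH z2_gt0 w2_gt0 st_neq0').
have m_gt0 : 0 < Num.min z0.2 z0.2^-1 by rewrite lt_min z02_gt0 invr_gt0.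
have N_gt0 : 0 < affine_norm2 s%:~R t%:~R w by exact: affine_norm2_gt0.
have P_ge := affine_norm2_mob_act_ge z02_gt0 det1 st_neq0; rewrite -/z in P_ge.
have P_gt0 : 0 < affine_norm2 s%:~R t%:~R z by exact: affine_norm2_gt0.
set m := Num.min _ _ in m_gt0 P_ge *; set N := affine_norm2 _ _ w in N_gt0 *.
set P := affine_norm2 _ _ z in P_gt0 P_ge *.
have c_gt0 : 0 < w.2 / (2 * N) by rewrite divr_gt0 ?mulr_gt0.
have -> : w.2 * P / (2 * z.2 * N) = w.2 / (2 * N) * (P / z.2).
  by field; rewrite !gt_eqF.
rewrite mulrAC ler_ln ?posrE ?(mulr_gt0 c_gt0) ?(divr_gt0 P_gt0 z2_gt0) //.
by apply: (ler_wpM2l (ltW c_gt0)); rewrite ler_pdivlMr // mulrC.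
Qed.

End UpperHalfPlane.

Section LogEstimates.
Variable R : realType.

Lemma ln_mul_powR (c n r : R) : 0 < c -> 0 < n -> ln (c * n `^ r) = ln c + r * ln n.
Proof. by move=> c_gt0 n_gt0; rewrite lnM ?posrE ?powR_gt0 // ln_powR. Qed.

Lemma ln_sqr_add_le (a b c : R) : 0 < b -> `|a| <= c -> b <= c ->
  ln (a ^+ 2 + b ^+ 2) <= ln 2 + 2 * ln c.
Proof.
move=> b_gt0 a_le b_le; have c_gt0 := lt_le_trans b_gt0 b_le.
have c2_gt0 : 0 < c ^+ 2 by rewrite exprn_gt0.
have Q_gt0 : 0 < a ^+ 2 + b ^+ 2 by rewrite ltr_wpDl ?sqr_ge0 ?exprn_gt0.
rewrite mulr_natl -lnXn // -lnM ?posrE //.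
rewrite ler_ln ?posrE ?mulr_gt0 // mulr2n mulrDl mul1r.
rewrite -real_normK ?num_real //; apply: lerD; apply: lerXn2r => //;
  by rewrite nnegrE ?normr_ge0 ?(ltW b_gt0) ?(ltW c_gt0).
Qed.

Lemma ln_approx_ratio_ge (n y a c1 c2 beta k m0 : R) :
  1 <= n -> 0 < c1 -> 0 < c2 -> 0 < m0 ->
  c1 * n `^ (- beta) <= y -> y <= c2 * n `^ (- beta) -> `|a| < n `^ (- k) ->
  Num.min (2 * k - beta) (beta - 2) * ln n - (`|ln c1| + `|ln c2| + 2 * ln 2 + `|ln m0|)
    <= ln (y * m0 / (2 * (a ^+ 2 + (n * y) ^+ 2))).
Proof.
move=> n_ge1 c1_gt0 c2_gt0 m0_gt0 y_ge y_le a_lt.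
have n_gt0 : 0 < n by apply: lt_le_trans n_ge1.
have lnn_ge0 : 0 <= ln n by exact: ln_ge0.
have y_gt0 : 0 < y by apply: lt_le_trans y_ge; rewrite mulr_gt0 ?powR_gt0.
have ny_gt0 : 0 < n * y by rewrite mulr_gt0.
have Q_gt0 : 0 < a ^+ 2 + (n * y) ^+ 2 by rewrite ltr_wpDl ?sqr_ge0 ?exprn_gt0.
have -> : ln (y * m0 / (2 * (a ^+ 2 + (n * y) ^+ 2)))
    = ln y + ln m0 - ln 2 - ln (a ^+ 2 + (n * y) ^+ 2).
  by rewrite !(lnM, lnV) ?posrE ?(mulr_gt0, invr_gt0) //; lra.
have lny_ge : ln c1 - beta * ln n <= ln y.
  by rewrite -mulNr -ln_mul_powR // ler_ln ?posrE ?mulr_gt0 ?powR_gt0.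
have lny_le : ln y <= ln c2 - beta * ln n.
  by rewrite -mulNr -ln_mul_powR // ler_ln ?posrE ?mulr_gt0 ?powR_gt0.
have ln2_ge0 : 0 <= ln (2 : R) by rewrite ln_ge0 // ler1n.
have := ler_norm (ln c1); have := ler_norm (ln c2); have := ler_norm (ln m0).
have := lerNnormlW (lexx `|ln c1|); have := lerNnormlW (lexx `|ln c2|).
have := lerNnormlW (lexx `|ln m0|).
set mu := Num.min _ _.
have mu_le_2k : mu * ln n <= (2 * k - beta) * ln n.
  by apply: (ler_wpM2r lnn_ge0); rewrite ge_min lexx.
have mu_le_2 : mu * ln n <= (beta - 2) * ln n.
  by apply: (ler_wpM2r lnn_ge0); rewrite ge_min lexx orbT.
have [a_le | ny_le] := leP `|a| (n * y).
- have lnQ_le := ln_sqr_add_le ny_gt0 a_le (lexx _).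
  rewrite lnM ?posrE // in lnQ_le; lra.
- have lna_lt : ln `|a| < - k * ln n.
    by rewrite -ln_powR ltr_ln ?posrE ?powR_gt0 // (lt_trans ny_gt0 ny_le).
  have lnQ_le := ln_sqr_add_le ny_gt0 (lexx _) (ltW ny_le); lra.
Qed.

Lemma eventually_le_affine_ln (r mu C : R) : r < mu ->
  exists N, forall n, (N <= n)%N -> 0 < ln (n%:R : R) /\ r * ln n%:R <= mu * ln n%:R - C.
Proof.
move=> r_lt_mu; set T := `|C| / (mu - r) + 1.
have T_gt0 : 0 < T by rewrite ltr_wpDl // divr_ge0 // subr_ge0; exact: ltW.
exists (Num.truncn (expR T)).+1 => n N_le.
have expT_lt : expR T < n%:R.
  by apply: (lt_le_trans (truncnS_gt _)); rewrite ler_nat.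
have T_lt : T < ln (n%:R : R).
  by rewrite -[T]expRK ltr_ln ?posrE ?expR_gt0 ?(lt_trans (expR_gt0 T)).
split; first exact: lt_trans T_lt.
have : (mu - r) * T <= (mu - r) * ln n%:R.
  by apply: ler_wpM2l; rewrite ?subr_ge0; exact: ltW.
have -> : (mu - r) * T = `|C| + (mu - r) by rewrite /T; field; rewrite gt_eqF ?subr_gt0.
have := ler_norm C; lra.
Qed.

End LogEstimates.

Lemma inf_dM_Rn_ge (R : realType) (z0 : R * R) (x y beta k c1 c2 : R) (n : nat) (m : int) :
  0 < z0.2 -> (0 < n)%N -> 0 < c1 -> 0 < c2 ->
  c1 * n%:R `^ (- beta) <= y -> y <= c2 * n%:R `^ (- beta) ->
  `|x - m%:~R / n%:R| < n%:R `^ (- k - 1) ->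
  Num.min (2 * k - beta) (beta - 2) * ln n%:R
    - (`|ln c1| + `|ln c2| + 2 * ln 2 + `|ln (Num.min z0.2 z0.2^-1)|)
  <= inf [set dM z0 z | z in Rn n x y].
Proof.
move=> z02_gt0 n_gt0 c1_gt0 c2_gt0 y_ge y_le x_approx.
have nR_gt0 : 0 < n%:R :> R by rewrite ltr0n.
have y_gt0 : 0 < y by apply: lt_le_trans y_ge; rewrite mulr_gt0 ?powR_gt0.
have m0_gt0 : 0 < Num.min z0.2 z0.2^-1 by rewrite lt_min z02_gt0 invr_gt0.
have nx_approx : `|n%:R * x - m%:~R| < n%:R `^ (- k).
  have -> : n%:R * x - m%:~R = n%:R * (x - m%:~R / n%:R) by field; rewrite gt_eqF.
  have -> : - k = 1 + (- k - 1) by ring.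
  rewrite powRD ?(gt_eqF nR_gt0) ?implybT // powRr1 ?ler0n //.
  by rewrite normrM gtr0_norm // ltr_pM2l.
apply: lb_le_inf.
  by exists (dM z0 (x + 0%:R / n%:R, y)), (x + 0%:R / n%:R, y) => //; exists 0%N.
move=> _ [_ [j _ <-] <-].
have n_neq0 : (n%:Z, - (m + j%:Z)) != (0, 0).
  by rewrite xpair_eqE (@gt_eqF _ _ n%:Z) // ltz_nat.
apply: le_trans (dM_ge_ln (w := (x + j%:R / n%:R, y)) z02_gt0 y_gt0 n_neq0).
have -> : affine_norm2 (n%:Z)%:~R (- (m + j%:Z))%:~R (x + j%:R / n%:R, y)
    = (n%:R * x - m%:~R) ^+ 2 + (n%:R * y) ^+ 2.
  rewrite /affine_norm2 /= rmorphN rmorphD /=; congr (_ ^+ 2 + _).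
  by field; rewrite gt_eqF.
by apply: ln_approx_ratio_ge; rewrite ?ler1n.
Qed.

Section Limsup.
Variable R : realType.
Local Open Scope ereal_scope.

Lemma limn_esup_ge_frequently (u : nat -> \bar R) (r : \bar R) :
  (forall N, exists2 n, (N <= n)%N & r <= u n) -> r <= limn_esup u.
Proof.
move=> frequently; rewrite /limn_esup limf_esupE; apply/ereal_infP => _ [V [N _ NV] <-].
have [n Nn r_le] := frequently N.
by apply: le_trans r_le _; apply: ereal_sup_ubound; exists n => //; exact: NV.
Qed.

Lemma lee_of_EFin_lt (a b : \bar R) : (forall r : R, r%:E < a -> r%:E <= b) -> a <= b.
Proof.
case: a => [a | | ] below_le; last exact: leNye.
- case: b below_le => [b | | ] below_le; last 2 first.
  + exact: leey.
  + by have := below_le (a - 1)%R; rewrite lte_fin gtrBl ltr01 => /(_ isT).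
  rewrite lee_fin leNgt; apply/negP => b_lt_a.
  by have := below_le ((a + b) / 2)%R; rewrite lte_fin lee_fin => /(_ ltac:(lra)); lra.
- by rewrite (eq_infty (fun r => below_le r (ltey _))).
Qed.

End Limsup.

Lemma prim_approx_limn_esup_ge (R : realType) (z0 : R * R) (x beta k r c1 c2 : R)
    (y : nat -> R) :
  0 < z0.2 -> 0 < c1 -> 0 < c2 ->
  (forall n : nat, (0 < n)%N ->
     c1 * n%:R `^ (- beta) <= y n /\ y n <= c2 * n%:R `^ (- beta)) ->
  prim_approx k x -> r < Num.min (2 * k - beta) (beta - 2) ->
  (r%:E <= limn_esup (fun n : nat =>
     ((inf [set dM z0 z | z in Rn n x (y n)]) / ln n%:R)%:E))%E.
Proof.
move=> z02_gt0 c1_gt0 c2_gt0 y_bound x_approx r_lt.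
have [N large] := eventually_le_affine_ln
  (`|ln c1| + `|ln c2| + 2 * ln 2 + `|ln (Num.min z0.2 z0.2^-1)|) r_lt.
apply: limn_esup_ge_frequently => M.
have [n [Nn [m [_ m_approx]]]] := x_approx (maxn M N).
have M_le : (M <= n)%N by apply: leq_trans (ltnW Nn); exact: leq_maxl.
have N_le : (N <= n)%N by apply: leq_trans (ltnW Nn); exact: leq_maxr.
have n_gt0 : (0 < n)%N by apply: leq_ltn_trans Nn.
have [y_ge y_le] := y_bound n n_gt0.
have [lnn_gt0 r_le] := large n N_le.
exists n => //; rewrite lee_fin ler_pdivlMr //.
exact: le_trans r_le (inf_dM_Rn_ge z02_gt0 n_gt0 c1_gt0 c2_gt0 y_ge y_le m_approx).
Qed.

Theorem theorem4p4 (R : realType) (z0 : R * R) (x beta : R) (y : nat -> R) :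
  0 < z0.2 ->
  0 <= x < 1 -> irrational x ->
  (1%:E < dioph_exp x)%E ->
  (forall n : nat, (0 < n)%N -> 0 < y n) ->
  (exists c1 c2 : R, 0 < c1 /\ 0 < c2 /\
     forall n : nat, (0 < n)%N ->
       c1 * powR (n%:R) (- beta) <= y n /\ y n <= c2 * powR (n%:R) (- beta)) ->
  2 < beta -> (beta%:E < 2%:E * dioph_exp x)%E ->
  (Order.min (2%:E * dioph_exp x - beta%:E) (beta - 2)%:E <=
   limn_esup (fun n : nat =>
     ((inf [set dM z0 z | z in Rn n x (y n)]) / ln (n%:R))%:E))%E.
Proof.
move=> z02_gt0 _ _ _ _ [c1 [c2 [c1_gt0 [c2_gt0 y_bound]]]] _ _.
apply: lee_of_EFin_lt => r; rewrite lt_min lte_fin => /andP[r_lt_2kappa r_lt].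
have : (((r + beta) / 2)%:E < dioph_exp x)%E.
  move: r_lt_2kappa; case: (dioph_exp x) => [kappa | | ] //=.
  - by rewrite -EFinM -EFinB !lte_fin => ?; lra.
  - by rewrite ltey.
  - by rewrite gt0_muleNy ?lte_fin // addNye.
move=> /ereal_sup_gt[_ [k [_ x_approx] <-]]; rewrite lte_fin => k_gt.
apply: (prim_approx_limn_esup_ge z02_gt0 c1_gt0 c2_gt0 y_bound x_approx).
by rewrite lt_min; apply/andP; split; lra.
Qed.
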